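(* Let $f$, $Q$, $L$, $d_Q$ be as in the context, let $x^*\in Q$ be a minimizer of $f$ over $Q$ with $f^*=f(x^* )$, and let $T\in\mathbb{N}_0$. Run the algorithm described in the context with $\gamma_t=\frac{t+1}{2}$ for all $0\le t\le T+1$. Then \[ f(u_T)-f^*\le\frac{4L_Td_Q(x^* )}{(T+1)(T+2)}+\sum_{t=0}^{T-1}\frac{4(L_t-L_{t+1})}{(T+1)(T+2)}\Big(d_Q(z_{t+1})-\tfrac12\|z_t-\hat x_{t+1}\|^2\Big). \]
   Context: $\mathbb{R}^n$ carries the standard scalar product $\langle\cdot,\cdot\rangle$ and a (possibly different) norm $\|\cdot\|$, with dual norm $\|u\|_*=\max\{\langle u,x\rangle:\|x\|=1\}$. $Q\subseteq\mathbb{R}^n$ is closed and convex; $f:\mathbb{R}^n\to\mathbb{R}$ is convex, differentiable, attains its minimum on $Q$, and $L>0$ satisfies $\|\nabla f(x)-\nabla f(y)\|_*\le L\|x-y\|$ for all $x,y\in Q$. A distance-generating function for $Q$ is $d_Q:Q\to\mathbb{R}_{\ge0}$ that is continuous on $Q$, strongly convex with modulus 1 w.r.t. $\|\cdot\|$, and whose subdifferential admits a continuous selection $d_Q'$ on $Q^o:=\{x\in Q:\partial d_Q(x)\neq\emptyset\}$. For $z\in Q^o$, $V_z(x)=d_Q(x)-d_Q(z)-\langle d_Q'(z),x-z\rangle$ and $\mathrm{Prox}_{Q,z}(s)=\arg\min_{x\in Q}\{\langle s,x-z\rangle+V_z(x)\}$. The $d_Q$-center is $c(d_Q)=\arg\min_{x\in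 Q}d_Q(x)$, and it is assumed that $d_Q(c(d_Q))=0$. Algorithm (with weights $(\gamma_t)_{t=0}^{T+1}$, $\Gamma_t:=\sum_{k=0}^t\gamma_k$): set $L_0=L$, $x_0=c(d_Q)$, $u_0=\arg\min_{x\in Q}\{\gamma_0(f(x_0)+\langle\nabla f(x_0),x-x_0\rangle)+L_0d_Q(x)\}$, $z_0=u_0$, $\tau_0=\gamma_1/\Gamma_1$, $x_1=\tau_0z_0+(1-\tau_0)u_0$, $\hat x_1=\mathrm{Prox}_{Q,z_0}(\gamma_1\nabla f(x_1)/L_0)$, $u_1=\tau_0\hat x_1+(1-\tau_0)u_0$. For $t=1,\dots,T$: choose $0<L_t\le L$ with $f(u_t)\le f(x_t)+\langle\nabla f(x_t),u_t-x_t\rangle+\frac{L_t}{2}\|u_t-x_t\|^2$; set $z_t=\arg\min_{x\in Q}\{\sum_{k=0}^t\gamma_k(f(x_k)+\langle\nabla f(x_k),x-x_k\rangle)+L_td_Q(x)\}$; set $\tau_t=\gamma_{t+1}/\Gamma_{t+1}$ and $x_{t+1}=\tau_tz_t+(1-\tau_t)u_t$; set $\hat x_{t+1}=\mathrm{Prox}_{Q,z_t}(\gamma_{t+1}\nabla f(x_{t+1})/L_t)$; set $u_{t+1}=\tau_t\hat x_{t+1}+(1-\tau_t)u_t$. *)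

(* R^n is 'rV[R]_n (row vectors),
   with its canonical (product) topology from matrix_normedtype. *)
From HB Require Import structures.
From mathcomp Require Import all_boot all_order all_algebra.
From mathcomp Require Import all_classical all_reals all_analysis.
Set Implicit Arguments. Unset Strict Implicit. Unset Printing Implicit Defensive.
Import Order.TTheory GRing.Theory Num.Theory.
Import numFieldNormedType.Exports.
Local Open Scope classical_set_scope.
Local Open Scope ring_scope.

Section Defs.
Variables (R : realType) (n : nat).
Local Notation vec := 'rV[R]_n.

Definition sdot (u x : vec) : R := \sum_(i < n) u ord0 i * x ord0 i.

Definition is_norm (nrm : vec -> R) : Prop :=
  [/\ forall x, 0 <= nrm x,
      forall x, nrm x = 0 -> x = 0,
      forall (a : R) x, nrm (a *: x) = `|a| * nrm x
    & forall x y, nrm (x + y) <= nrm x + nrm y].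

Definition dual_norm (nrm : vec -> R) (u : vec) : R :=
  sup [set sdot u x | x in [set x | nrm x = 1]].

Definition convex_fun (f : vec -> R) : Prop :=
  forall x y (t : R), 0 <= t <= 1 ->
    f (t *: x + (1 - t) *: y) <= t * f x + (1 - t) * f y.

Definition strongly_convex1_on (nrm : vec -> R) (Q : set vec) (d : vec -> R) : Prop :=
  forall x y (t : R), Q x -> Q y -> 0 <= t <= 1 ->
    d (t *: x + (1 - t) *: y) <=
      t * d x + (1 - t) * d y - 2^-1 * t * (1 - t) * nrm (x - y) ^+ 2.

(* subdifferential of d : Q -> R (d seen as +oo outside Q) *)
Definition subdiff (Q : set vec) (d : vec -> R) (x : vec) : set vec :=
  [set g | forall y, Q y -> d x + sdot g (y - x) <= d y].

Definition Qo (Q : set vec) (d : vec -> R) : set vec :=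
  [set x | Q x /\ subdiff Q d x !=set0].

Definition is_dgf (nrm : vec -> R) (Q : set vec) (d : vec -> R) (d' : vec -> vec) : Prop :=
  [/\ forall x, Q x -> 0 <= d x,
      {within Q, continuous d},
      strongly_convex1_on nrm Q d,
      forall x, Qo Q d x -> subdiff Q d x (d' x)
    & {within Qo Q d, continuous d'}].

Definition is_argmin (Q : set vec) (F : vec -> R) (x : vec) : Prop :=
  Q x /\ forall y, Q y -> F x <= F y.

Definition bregman (d : vec -> R) (d' : vec -> vec) (z x : vec) : R :=
  d x - d z - sdot (d' z) (x - z).

Definition is_prox (Q : set vec) (d : vec -> R) (d' : vec -> vec) (z s p : vec) : Prop :=
  is_argmin Q (fun x => sdot s (x - z) + bregman d d' z x) p.

End Defs.

Definition gam (R : realType) (t : nat) : R := t.+1%:R / 2.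
Definition Gam (R : realType) (t : nat) : R := \sum_(k < t.+1) gam R k.
Definition tau (R : realType) (t : nat) : R := gam R t.+1 / Gam R t.+1.

From HB Require Import structures.
From mathcomp Require Import all_boot all_order all_algebra.
From mathcomp Require Import all_classical all_reals all_analysis.
From mathcomp Require Import ring lra.
Import Order.TTheory GRing.Theory Num.Theory.
Import numFieldNormedType.Exports.
Local Open Scope classical_set_scope.
Local Open Scope ring_scope.
Set Implicit Arguments. Unset Strict Implicit. Unset Printing Implicit Defensive.

(* Estimate-sequence argument.  The model psi_t(p) = sum_(k <= t) gamma_k
   (f(x_k) + <grad f(x_k), p - x_k>) + L_t d(p), here [model t], is minimised
   over Q by z_t; E_t, here [err t], is the error sum of the bound.  By
   induction Gamma_t f(u_t) <= psi_t(z_t) + E_t: the step combines the descent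
   inequality for L_(t+1), convexity of f at x_(t+1), the three-point
   inequality of the prox step, and the growth
   psi_t(p) - psi_t(z_t) >= L_t V_(z_t)(p) given by the optimality of z_t; the
   weights enter only through tau_t Gamma_(t+1) = gamma_(t+1) and
   Gamma_(t+1) tau_t^2 <= 1.  At t = T, convexity of f gives
   psi_T(z_T) <= psi_T(xstar) <= Gamma_T f(xstar) + L_T d(xstar), and
   Gamma_T = (T+1)(T+2)/4. *)

Section RealBounds.
Variable R : realType.

Lemma ler_of_onemM_ler (A B : R) :
  (forall t, 0 < t <= 1 -> (1 - t) * B <= A) -> B <= A.
Proof.
move=> H; have A0 : 0 <= A by have := H 1; rewrite lexx ltr01 subrr mul0r; apply.
case: (lerP B A) => // AB; exfalso.
have B0 : 0 < B by apply: le_lt_trans AB.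
pose t := (B - A) / (2 * B).
have t0 : 0 < t by rewrite /t divr_gt0 ?mulr_gt0 // subr_gt0.
have t1 : t <= 1 by rewrite /t ler_pdivrMr ?mulr_gt0 //; lra.
have := H t; rewrite t0 t1 => /(_ isT).
have -> : (1 - t) * B = (A + B) / 2 by rewrite /t; field; rewrite gt_eqF.
lra.
Qed.

Lemma ler_of_ler_addVn (A B C : R) : 0 <= C ->
  (forall K : nat, A <= B + C / K.+1%:R) -> A <= B.
Proof.
move=> C0 H; apply/ler_addgt0Pr => e e0.
pose K := Num.truncn (C / e).
have hK : C / e < K.+1%:R by exact: truncnS_gt.
apply: le_trans (H K) _; rewrite lerD2l.
have k0 : 0 < K.+1%:R :> R by rewrite ltr0n.
rewrite ler_pdivrMr //; move: hK; rewrite ltr_pdivrMr // => h.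
by rewrite mulrC; exact: ltW.
Qed.

Lemma ge0_of_ge_oppM (C X : R) : 0 <= C ->
  (forall eta, 0 < eta -> eta <= 1 -> - (eta * C) <= X) -> 0 <= X.
Proof.
move=> C0 H; apply: (ler_of_ler_addVn C0) => K.
have k0 : 0 < K.+1%:R :> R by rewrite ltr0n.
have := H K.+1%:R^-1; rewrite invr_gt0 invf_le1 // ler1n => /(_ k0 isT).
by rewrite mulrC addrC -lerBlDl sub0r.
Qed.

End RealBounds.

Section ScalarProduct.
Variables (R : realType) (n : nat).
Local Notation vec := 'rV[R]_n.
Implicit Types (u v x y : vec).

Lemma sdotC u v : sdot u v = sdot v u.
Proof. by apply: eq_bigr => i _; rewrite mulrC. Qed.

Lemma sdotDl u v x : sdot (u + v) x = sdot u x + sdot v x.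
Proof. by rewrite /sdot -big_split; apply: eq_bigr => i _; rewrite mxE mulrDl. Qed.

Lemma sdotDr u x y : sdot u (x + y) = sdot u x + sdot u y.
Proof. by rewrite sdotC sdotDl !(sdotC u). Qed.

Lemma sdotZl a u x : sdot (a *: u) x = a * sdot u x.
Proof. by rewrite /sdot mulr_sumr; apply: eq_bigr => i _; rewrite mxE mulrA. Qed.

Lemma sdotZr a u x : sdot u (a *: x) = a * sdot u x.
Proof. by rewrite sdotC sdotZl sdotC. Qed.

Lemma sdotNl u x : sdot (- u) x = - sdot u x.
Proof. by rewrite -scaleN1r sdotZl mulN1r. Qed.

Lemma sdotBl u v x : sdot (u - v) x = sdot u x - sdot v x.
Proof. by rewrite sdotDl sdotNl. Qed.

Lemma sdotBr u x y : sdot u (x - y) = sdot u x - sdot u y.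
Proof. by rewrite sdotC sdotBl !(sdotC u). Qed.

Lemma sdot0l u : sdot 0 u = 0.
Proof. by rewrite /sdot big1 // => i _; rewrite mxE mul0r. Qed.

Lemma sdot0r u : sdot u 0 = 0.
Proof. by rewrite sdotC sdot0l. Qed.

Lemma sdot_suml (I : finType) (F : I -> vec) x :
  sdot (\sum_i F i) x = \sum_i sdot (F i) x.
Proof.
elim/big_rec2: _ => [|i a y _ <-]; first by rewrite sdot0l.
by rewrite sdotDl.
Qed.

Lemma sdot_sqrDZ a u v : sdot (u + a *: v) (u + a *: v) =
  sdot u u + 2 * a * sdot u v + a ^+ 2 * sdot v v.
Proof.
rewrite /sdot !mulr_sumr -!big_split; apply: eq_bigr => i _; rewrite !mxE /=; ring.
Qed.

Lemma sqr_coord_le_sdot v i : v ord0 i ^+ 2 <= sdot v v.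
Proof.
rewrite /sdot (bigD1 i) //= expr2 lerDl.
by apply: sumr_ge0 => k _; rewrite -expr2; exact: sqr_ge0.
Qed.

Lemma norm_coord_le v i : `|v ord0 i| <= `|v|.
Proof.
rewrite [X in _ <= X]/Num.Def.normr /= mx_normrE; apply/bigmax_geP; right => /=.
by exists (ord0, i).
Qed.

Lemma sqr_norm_le_sdot v : `|v| ^+ 2 <= sdot v v.
Proof.
have [->|v0] := eqVneq `|v| 0.
  by rewrite expr0n /=; apply: sumr_ge0 => i _; rewrite -expr2; exact: sqr_ge0.
have [[i j] /= e] := mx_norm_neq0 v0.
have -> : `|v| = `|v i j| := e; clear e.
have -> : i = ord0 by apply/val_inj; case: i => -[].
by rewrite -normrX ger0_norm ?sqr_ge0 // sqr_coord_le_sdot.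
Qed.

Lemma sdot_le_norm u v : `|sdot u v| <= n%:R * `|u| * `|v|.
Proof.
apply: le_trans (ler_norm_sum _ _ _) _.
have <- : \sum_(i < n) `|u| * `|v| = n%:R * `|u| * `|v|.
  by rewrite sumr_const card_ord -mulrA mulr_natl.
apply: ler_sum => i _.
by rewrite normrM; apply: ler_pM => //; exact: norm_coord_le.
Qed.

Lemma sdot_perturbed_ge (K e v r : vec) t eta : 0 < t -> 0 < eta -> eta <= 1 ->
  `|e| < eta -> `|r| < t * eta -> 0 <= sdot (K + e) (t *: v + r) ->
  - (eta * (n%:R * (`|K| + `|v| + 1))) <= sdot K v.
Proof.
move=> t0 eta0 eta1 ne nr; rewrite sdotDl !sdotDr !sdotZr.
have bound (a b : vec) : sdot a b <= n%:R * `|a| * `|b|.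
  exact: le_trans (ler_norm _) (sdot_le_norm a b).
have nK0 := normr_ge0 K; have ne0 := normr_ge0 e; have nr0 := normr_ge0 r.
have n0 : 0 <= n%:R :> R := ler0n _ _.
have b1 : sdot K r <= n%:R * `|K| * (t * eta).
  by apply: le_trans (bound K r) _; apply: ler_wpM2l; [exact: mulr_ge0 | exact: ltW].
have b2 : t * sdot e v <= t * (n%:R * eta * `|v|).
  apply: ler_wpM2l; first exact: ltW.
  apply: le_trans (bound e v) _; apply: ler_wpM2r => //.
  by apply: ler_wpM2l => //; exact: ltW.
have b3 : sdot e r <= n%:R * t * eta.
  apply: le_trans (bound e r) _; rewrite -!mulrA; apply: ler_wpM2l => //.
  apply: le_trans (_ : eta * (t * eta) <= _); first by apply: ler_pM => //; apply: ltW.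
  by rewrite mulrC; apply: ler_piMr => //; rewrite mulr_ge0 ?ltW.
move=> hA; have : 0 <= t * (sdot K v + eta * (n%:R * (`|K| + `|v| + 1))) by lra.
by rewrite pmulr_rge0 //; lra.
Qed.

Definition sqdist (p x : vec) : R := sdot (x - p) (x - p).

Lemma sqdist_continuous p : continuous (sqdist p).
Proof.
have -> : sqdist p = fun x => \sum_(i < n) (x ord0 i - p ord0 i) * (x ord0 i - p ord0 i).
  by apply/funext => x; apply: eq_bigr => i _; rewrite !mxE.
apply: continuous_big; first exact: add_continuous.
move=> i _ x.
have hc : {for x, continuous (fun y : vec => y ord0 i - p ord0 i)}.
  apply: (@cvgB _ _ _ _ _ (fun y : vec => y ord0 i) (fun=> p ord0 i)).
  - exact: nbhs_filter.
  - exact: (@coord_continuous R 1 n ord0 i x).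
  - by apply: cvg_cst; exact: nbhs_filter.
exact: (cvgM hc hc).
Qed.

Lemma sqdist_combination p w y t :
  sqdist p (t *: y + (1 - t) *: w) =
  sqdist p w + 2 * t * sdot (w - p) (y - w) + t ^+ 2 * sqdist w y.
Proof.
rewrite /sqdist.
have -> : t *: y + (1 - t) *: w - p = (w - p) + t *: (y - w).
  by apply/rowP => i; rewrite !mxE; ring.
by rewrite sdot_sqrDZ.
Qed.

Lemma convex_setP (Q : set vec) : convex_set Q ->
  forall x y t, Q x -> Q y -> 0 <= t <= 1 -> Q (t *: x + (1 - t) *: y).
Proof.
move=> cQ x y t Qx Qy /andP[t0 t1].
by have := cQ x y (Itv01 t0 t1); rewrite !inE => /(_ Qx Qy).
Qed.

End ScalarProduct.

Section Norm.
Variables (R : realType) (n : nat).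
Local Notation vec := 'rV[R]_n.
Variable nrm : vec -> R.
Hypothesis nrmP : is_norm nrm.
Implicit Types (x y : vec).

Lemma nrm_ge0 x : 0 <= nrm x.
Proof. by case: nrmP. Qed.

Lemma nrm_eq0 x : nrm x = 0 -> x = 0.
Proof. by case: nrmP => _ + _ _; apply. Qed.

Lemma nrm_gt0 x : x != 0 -> 0 < nrm x.
Proof.
by move=> x0; rewrite lt_neqAle nrm_ge0 andbT eq_sym; apply: contra_neq x0; exact: nrm_eq0.
Qed.

Lemma nrmZ a x : nrm (a *: x) = `|a| * nrm x.
Proof. by case: nrmP. Qed.

Lemma nrmD x y : nrm (x + y) <= nrm x + nrm y.
Proof. by case: nrmP. Qed.

Lemma nrm0 : nrm 0 = 0.
Proof. by rewrite -(scale0r (0 : vec)) nrmZ normr0 mul0r. Qed.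

Lemma nrmN x : nrm (- x) = nrm x.
Proof. by rewrite -scaleN1r nrmZ normrN1 mul1r. Qed.

Lemma nrm_distC x y : nrm (x - y) = nrm (y - x).
Proof. by rewrite -nrmN opprB. Qed.

Lemma nrm_sum (I : finType) (F : I -> vec) : nrm (\sum_i F i) <= \sum_i nrm (F i).
Proof.
elim/big_rec2: _ => [|i a y _ Hy]; first by rewrite nrm0.
by apply: le_trans (nrmD _ _) _; exact: lerD.
Qed.

Lemma nrm_le_norm : exists2 C : R, 0 <= C & forall x, nrm x <= C * `|x|.
Proof.
exists (\sum_(i < n) nrm (delta_mx ord0 i)); first by apply: sumr_ge0 => i _; exact: nrm_ge0.
move=> x; rewrite {1}(row_sum_delta x); apply: le_trans (nrm_sum _) _.
rewrite mulr_suml; apply: ler_sum => i _.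
by rewrite nrmZ mulrC; apply: ler_wpM2l; [exact: nrm_ge0 | exact: norm_coord_le].
Qed.

Lemma nrm_continuous : continuous nrm.
Proof.
have [C C0 nrmC] := nrm_le_norm.
have lip x y : `|nrm x - nrm y| <= C * `|x - y|.
  apply: le_trans (nrmC _); rewrite ler_norml; apply/andP; split.
  - by have := nrmD x (y - x); rewrite addrC subrK [nrm (y - x)]nrm_distC; lra.
  - by have := nrmD y (x - y); rewrite addrC subrK; lra.
move=> x; apply/(@cvgrPdist_lt _ _ _ (nbhs x) _) => e e0.
have d0 : 0 < e / (C + 1) by rewrite divr_gt0 // ltr_pwDr.
near=> y.
apply: le_lt_trans (lip _ _) _.
have : `|x - y| < e / (C + 1).
  near: y; apply/nbhs_ballP; exists (e / (C + 1)) => //= y.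
  by rewrite -ball_normE.
rewrite ltr_pdivlMr ?ltr_pwDr // => h.
have : C * `|x - y| <= (C + 1) * `|x - y| by apply: ler_wpM2r => //; lra.
lra.
Unshelve. all: by end_near.
Qed.

(* [c] is the minimum of [nrm] on the compact sup-norm unit sphere [S]. *)
Lemma nrm_ge_norm : exists2 c : R, 0 < c & forall x, c * `|x| <= nrm x.
Proof.
pose S := [set v : vec | forall i, `[(-1 : R), 1]%classic (v ord0 i)] `&` [set v : vec | 1 <= `|v|].
have Snormalize x : x != 0 -> S (`|x|^-1 *: x).
  move=> x0; have nx : 0 < `|x| by rewrite normr_gt0.
  split => [i|] /=; last by rewrite normrZ normfV normr_id mulVf ?gt_eqF.
  rewrite in_itv /= -ler_norml mxE normrM normfV normr_id ler_pdivrMl // mulr1.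
  exact: norm_coord_le.
have [[x0 Sx0]|S0] := pselect (S !=set0); last first.
  exists 1 => // x; have [->|xn0] := eqVneq x 0; first by rewrite normr0 mulr0 nrm_ge0.
  by exfalso; apply: S0; exists (`|x|^-1 *: x); exact: Snormalize.
have cS : compact S.
  apply: compact_closedI.
    by apply: (@rV_compact R n (fun=> `[(-1 : R), 1]%classic)) => i; exact: segment_compact.
  apply: (@preimage_closed _ _ (fun v : vec => `|v|) [set x : R | 1 <= x]); last exact: closed_ge.
  by move=> v _; exact: norm_continuous.
have [c Sc cmin] : exists2 c, c \in S & forall t, t \in S -> nrm c <= nrm t.
  apply: EVT_min_rV => //; first by exists x0.
  exact/continuous_subspaceT/nrm_continuous.
exists (nrm c).
  apply: nrm_gt0; apply/eqP => c0; move: Sc; rewrite inE c0 => -[_] /=.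
  by rewrite normr0 ler10.
move=> x; have [->|xn0] := eqVneq x 0; first by rewrite normr0 mulr0 nrm_ge0.
have := cmin _ (mem_set (Snormalize _ xn0)).
have nx : 0 < `|x| by rewrite normr_gt0.
by rewrite nrmZ normfV normr_id ler_pdivlMl // mulrC.
Qed.

Lemma sdot_le_dual_norm (a b : vec) : sdot a b <= dual_norm nrm a * nrm b.
Proof.
have [->|b0] := eqVneq b 0; first by rewrite sdot0r nrm0 mulr0.
have nb := nrm_gt0 b0.
have [c c0 cle] := nrm_ge_norm.
(* By [nrm_ge_norm] the supremum defining the dual norm is finite. *)
pose y := (nrm b)^-1 *: b.
have ny : nrm y = 1 by rewrite nrmZ normfV gtr0_norm // mulVf // gt_eqF.
have hs : has_sup [set sdot a x | x in [set x | nrm x = 1]].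
  split; first by exists (sdot a y); exists y.
  exists (n%:R * `|a| / c) => _ [x /= nx <-].
  apply: le_trans (ler_norm _) _; apply: le_trans (sdot_le_norm _ _) _.
  have := cle x; rewrite nx ler_pdivlMr // => cx.
  have na : 0 <= n%:R * `|a| by exact: mulr_ge0.
  have -> : n%:R * `|a| * `|x| * c = n%:R * `|a| * (c * `|x|) by ring.
  by apply: ler_piMr.
have := sup_upper_bound hs (ex_intro2 _ _ y ny erefl).
rewrite -/(dual_norm nrm a) /y sdotZr => h.
have -> : sdot a b = nrm b * ((nrm b)^-1 * sdot a b) by field; rewrite gt_eqF.
by rewrite mulrC; apply: ler_wpM2r => //; exact: ltW.
Qed.

End Norm.

Section SmoothConvex.
Variables (R : realType) (n : nat).
Local Notation vec := 'rV[R]_n.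
Variables (f : vec -> R) (gradf : vec -> vec).
Hypothesis cf : convex_fun f.
Hypothesis df : forall p, differentiable f p /\ forall h, 'd f p h = sdot (gradf p) h.

Lemma convex_gradient_ineq x y : f x + sdot (gradf x) (y - x) <= f y.
Proof.
have [dfx dfE] := df x.
have dvb : derivable f x (y - x) := diff_derivable dfx.
rewrite -dfE -deriveE // -lerBrDl /derive cvg_at_rightE //.
apply: limr_le.
  rewrite -(cvg_at_rightE (fun h : R => h^-1 *: ((f \o shift x) (h *: (y - x)) - f x))) //.
  apply: cvg_trans dvb; apply: cvg_app.
  move=> A [e egt0 Ae]; exists e => // t te tgt0; apply: Ae => //.
  exact/lt0r_neq0.
near=> h.
have h0 : 0 < h by near: h; exists 1 => /=.
have h1 : h <= 1.
  near: h; exists 1 => //= t; rewrite /= distrC subr0 => /(le_lt_trans (ler_norm _)) /ltW.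
  by [].
rewrite /= [h^-1 *: _]mulrC ler_pdivrMr //.
have -> : h *: (y - x) + x = h *: y + (1 - h) *: x by apply/rowP => i; rewrite !mxE; ring.
have := cf y x (t:=h); rewrite h1 ltW // => /(_ isT).
lra.
Unshelve. all: by end_near.
Qed.

Variables (nrm : vec -> R) (Q : set vec) (L : R).
Hypothesis nrmP : is_norm nrm.
Hypothesis cQ : convex_set Q.
Hypothesis L0 : 0 <= L.
Hypothesis lipg : forall p q, Q p -> Q q ->
  dual_norm nrm (gradf p - gradf q) <= L * nrm (p - q).

(* Summing the gradient inequality over a K-step subdivision of the segment
   [x, y] replaces the integral form of Taylor's formula; the discretisation
   error is L * nrm (y - x) ^+ 2 / (2 * K), which vanishes as K grows. *)
Lemma lipschitz_gradient_upper_bound x y : Q x -> Q y ->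
  f y <= f x + sdot (gradf x) (y - x) + L / 2 * nrm (y - x) ^+ 2.
Proof.
move=> Qx Qy.
set h := y - x; set S := sdot (gradf x) h; set Nh := nrm h.
have Nh0 : 0 <= Nh by exact: nrm_ge0.
apply: (@ler_of_ler_addVn _ _ _ (L * Nh ^+ 2 / 2)).
  by apply: divr_ge0 => //; apply: mulr_ge0 => //; exact: sqr_ge0.
move=> K; pose P : R := K.+1%:R; pose del : R := P^-1.
have P0 : 0 < P by rewrite ltr0n.
have del0 : 0 < del by rewrite invr_gt0.
pose q (m : nat) := x + (m%:R * del) *: h.
have Qq m : (m <= K.+1)%N -> Q (q m).
  move=> mK; have s01 : 0 <= m%:R * del <= 1.
    apply/andP; split; first by rewrite mulr_ge0 ?ler0n ?ltW.
    have : m%:R <= P by rewrite /P ler_nat.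
    by move=> /(ler_wpM2r (ltW del0)); rewrite /del mulfV ?gt_eqF.
  have := convex_setP cQ Qy Qx s01.
  by congr Q; rewrite /q /h; apply/rowP => i; rewrite !mxE; ring.
have partial m : (m <= K.+1)%N ->
    f (q m) - f x <= m%:R * del * S + L * Nh ^+ 2 * (m%:R * (m%:R + 1)) * del ^+ 2 / 2.
  elim: m => [|m IH] mK.
    by rewrite /q mul0r scale0r addr0 subrr !mul0r mulr0 !mul0r addr0.
  have := convex_gradient_ineq (q m.+1) (q m).
  have -> : q m - q m.+1 = (- del) *: h.
    by rewrite /q; apply/rowP => i; rewrite !mxE [m.+1%:R]mulrSr; ring.
  rewrite sdotZr; set G := sdot (gradf (q m.+1)) h => gi.
  have hG : G - S <= L * (m.+1%:R * del * Nh) * Nh.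
    have -> : G - S = sdot (gradf (q m.+1) - gradf x) h by rewrite sdotBl.
    apply: le_trans (sdot_le_dual_norm nrmP _ _) _; apply: ler_wpM2r => //.
    have -> : m.+1%:R * del * Nh = nrm (q m.+1 - x).
      by rewrite /q addrC addKr nrmZ // ger0_norm // mulr_ge0 ?ler0n ?ltW.
    exact: lipg (Qq _ mK) Qx.
  have := ler_wpM2l (ltW del0) hG; have := IH (ltnW mK).
  rewrite [m.+1%:R]mulrSr; lra.
have := partial _ (leqnn K.+1).
have -> : q K.+1 = y.
  by rewrite /q /del -/P mulfV ?gt_eqF // scale1r /h; apply/rowP => i; rewrite !mxE; ring.
have -> : L * Nh ^+ 2 * (P * (P + 1)) * del ^+ 2 / 2 = L / 2 * Nh ^+ 2 + L * Nh ^+ 2 / 2 / P.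
  by rewrite /del; field; rewrite gt_eqF.
by rewrite -/P /del mulfV ?gt_eqF // mul1r lerBlDl !addrA.
Qed.

End SmoothConvex.

Section StronglyConvex.
Variables (R : realType) (n : nat).
Local Notation vec := 'rV[R]_n.
Variables (nrm : vec -> R) (Q : set vec) (d : vec -> R).
Hypothesis cQ : convex_set Q.
Hypothesis scd : strongly_convex1_on nrm Q d.

Lemma subdiff_strongly_convex_ge z y g : Q z -> Q y -> subdiff Q d z g ->
  2^-1 * nrm (y - z) ^+ 2 <= d y - d z - sdot g (y - z).
Proof.
move=> Qz Qy dzg; apply: ler_of_onemM_ler => t /andP[t0 t1].
have t01 : 0 <= t <= 1 by rewrite ltW.
have := dzg _ (convex_setP cQ Qy Qz t01).
have -> : t *: y + (1 - t) *: z - z = t *: (y - z) by apply/rowP => i; rewrite !mxE; ring.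
rewrite sdotZr => h2; have h1 := scd Qy Qz t01.
rewrite -(@ler_pM2l _ t) //; lra.
Qed.

End StronglyConvex.

Lemma argmin_lin_subdiff (R : realType) (n : nat) (Q : set 'rV[R]_n)
    (d : 'rV[R]_n -> R) (S z : 'rV[R]_n) (c : R) :
  0 < c -> (forall p, Q p -> sdot S z + c * d z <= sdot S p + c * d p) ->
  subdiff Q d z (- c^-1 *: S).
Proof.
move=> c0 zmin y Qy; rewrite sdotZl sdotBr.
have -> : d z + - c^-1 * (sdot S y - sdot S z) = c^-1 * (c * d z - sdot S y + sdot S z).
  by field; rewrite gt_eqF.
by rewrite ler_pdivrMl //; have := zmin y Qy; lra.
Qed.

Section DistanceGenerating.
Variables (R : realType) (n : nat).
Local Notation vec := 'rV[R]_n.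
Variables (nrm : vec -> R) (Q : set vec) (d : vec -> R) (d' : vec -> vec).
Hypothesis clQ : closed Q.
Hypothesis cQ : convex_set Q.
Hypothesis dgf : is_dgf nrm Q d d'.

Lemma dgf_ge0 x : Q x -> 0 <= d x.
Proof. by case: dgf => + _ _ _ _; apply. Qed.

Lemma dgf_convex x y t : Q x -> Q y -> 0 <= t <= 1 ->
  d (t *: x + (1 - t) *: y) <= t * d x + (1 - t) * d y.
Proof.
move=> Qx Qy /[dup] t01 /andP[t0 t1]; case: dgf => _ _ sc _ _.
apply: le_trans (sc _ _ _ Qx Qy t01) _; rewrite lerBlDr lerDl.
apply: mulr_ge0; last exact: sqr_ge0.
by rewrite !mulr_ge0 ?invr_ge0 ?subr_ge0.
Qed.

Lemma penalized_argmin_Qo p M w : 0 < M -> Q w ->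
  (forall x, Q x -> d w + M * sqdist p w <= d x + M * sqdist p x) -> Qo Q d w.
Proof.
move=> M0 Qw wmin; split => //.
exists (- (2 * M) *: (w - p)) => y Qy; rewrite sdotZl.
set A := d y - d w + 2 * M * sdot (w - p) (y - w).
suff : M * sqdist w y <= A + M * sqdist w y by rewrite /A; lra.
apply: ler_of_onemM_ler => t /andP[t0 t1].
have t01 : 0 <= t <= 1 by rewrite ltW.
have := wmin _ (convex_setP cQ Qy Qw t01); rewrite sqdist_combination => h1.
have := dgf_convex Qy Qw t01 => h2.
have h3 : 0 <= M * t ^+ 2 * sqdist w y.
  apply: mulr_ge0; first by rewrite mulr_ge0 ?sqr_ge0 ?ltW.
  exact: le_trans (sqr_ge0 _) (sqr_norm_le_sdot _).
rewrite -(@ler_pM2l _ t) // /A; nra.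
Qed.

(* Outside a box of half-width [rho] around [p] the penalty alone exceeds
   [d p], so the minimum may be taken over a compact set. *)
Lemma penalized_argmin_exists p M : 0 < M -> Q p ->
  exists2 w, Q w & forall x, Q x -> d w + M * sqdist p w <= d x + M * sqdist p x.
Proof.
move=> M0 Qp; have dp0 := dgf_ge0 Qp.
pose G x := d x + M * sqdist p x.
pose rho := d p / M + 1.
have rho1 : 1 <= rho by rewrite /rho lerDr divr_ge0 // ltW.
have dp_rho : d p <= M * rho ^+ 2.
  apply: (@le_trans _ _ (M * rho)).
    by rewrite /rho mulrDr mulrCA mulfV ?gt_eqF //; lra.
  by rewrite ler_pM2l // expr2 ler_peMr //; lra.
pose box := [set v : vec | forall i, `[p ord0 i - rho, p ord0 i + rho]%classic (v ord0 i)].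
pose K := box `&` Q.
have cK : compact K.
  apply: compact_closedI => //.
  by apply: (@rV_compact R n (fun i => `[p ord0 i - rho, p ord0 i + rho]%classic)) => i;
    exact: segment_compact.
have Kp : K p by split => // i /=; rewrite in_itv /=; apply/andP; split; lra.
have Gc : {within K, continuous G}.
  have dc : {within K, continuous d}.
    by case: dgf => _ hc _ _ _; apply: continuous_subspaceW hc => x [].
  have qc : {within K, continuous (fun x => M * sqdist p x)}.
    apply: continuous_subspaceT => x.
    by apply: (@cvgM _ _ _ (nbhs_filter x) (fun=> M) (sqdist p));
      [apply: cvg_cst | exact: sqdist_continuous].
  by move=> x; apply: cvgD; [exact: dc | exact: qc].
have [w Kw wmin] : exists2 c, c \in K & forall t, t \in K -> G c <= G t.
  by apply: EVT_min_rV => //; exists p.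
move: Kw; rewrite inE => -[_ Qw]; exists w => // x Qx.
have [bx|nbx] := pselect (box x); first by apply: wmin; rewrite inE.
have Gwp : G w <= d p.
  by have := wmin p (mem_set Kp); rewrite /G /sqdist subrr sdot0r mulr0 addr0.
have [i /= hi] : exists i, ~ `[p ord0 i - rho, p ord0 i + rho]%classic (x ord0 i).
  by apply/existsNP => hall; apply: nbx.
have hi' : rho < `|x ord0 i - p ord0 i|.
  rewrite ltNge; apply/negP => h; apply: hi; rewrite in_itv /=.
  by move: h; rewrite ler_norml => /andP[h1 h2]; apply/andP; split; lra.
have hsq : rho ^+ 2 <= sqdist p x.
  apply: le_trans (sqr_coord_le_sdot (x - p) i); rewrite !mxE.
  apply: (@le_trans _ _ (`|x ord0 i - p ord0 i| ^+ 2)).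
    by rewrite !expr2; nra.
  by rewrite -normrX ger0_norm ?sqr_ge0.
have := dgf_ge0 Qx; have : M * rho ^+ 2 <= M * sqdist p x by rewrite ler_pM2l.
move: Gwp; rewrite /G; lra.
Qed.

Lemma Qo_dense p e : Q p -> 0 < e -> exists2 w, Qo Q d w & `|w - p| < e.
Proof.
move=> Qp e0; have dp0 := dgf_ge0 Qp.
pose M := (d p + 1) / e ^+ 2.
have M0 : 0 < M by rewrite /M divr_gt0 ?exprn_gt0 //; lra.
have [w Qw wmin] := penalized_argmin_exists M0 Qp.
exists w; first exact: penalized_argmin_Qo wmin.
have : M * `|w - p| ^+ 2 < M * e ^+ 2.
  have -> : M * e ^+ 2 = d p + 1 by rewrite /M; field; rewrite gt_eqF ?exprn_gt0.
  have := wmin p Qp; rewrite /sqdist subrr sdot0r mulr0 addr0.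
  have := dgf_ge0 Qw; have := sqr_norm_le_sdot (w - p).
  move: (sdot (w - p) (w - p)) => s; nra.
by rewrite ltr_pM2l // => h; have := normr_ge0 (w - p); nra.
Qed.

Lemma dgf_selection_near z eta : Qo Q d z -> 0 < eta -> exists2 del : R, 0 < del &
  forall w, Qo Q d w -> `|z - w| < del -> `|d' z - d' w| < eta.
Proof.
move=> Qoz eta0; case: dgf => _ _ _ _ /subspace_continuousP /(_ z Qoz).
move/(@cvgrPdist_lt _ _ _ _ (within_filter _ (nbhs_filter z))) => /(_ eta eta0).
rewrite /within /= => /nbhs_ballP [del del0 hb].
by exists del => // w Qow zw; apply: hb => //; rewrite -ball_normE.
Qed.

Section FirstOrder.
Variables (S z : vec).
Hypothesis Qz : Q z.
Hypothesis zmin : forall p, Q p -> sdot S z + d z <= sdot S p + d p.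

Lemma argmin_lin_Qo : Qo Q d z.
Proof.
split => //; exists (- 1^-1 *: S); apply: argmin_lin_subdiff => // p Qp.
by rewrite !mul1r; exact: zmin.
Qed.

Lemma argmin_lin_monotone w : Qo Q d w -> 0 <= sdot (S + d' w) (w - z).
Proof.
move=> Qow; have Qw : Q w by case: Qow.
case: dgf => _ _ _ dsub _; have := dsub _ Qow _ Qz; have := zmin Qw.
rewrite sdotDl !sdotBr; lra.
Qed.

(* By continuity of [d'], monotonicity at points [w] of [Qo] close to
   [z + t (y - z)] passes to the limit [w -> z]. *)
Lemma argmin_lin_first_order y : Q y -> 0 <= sdot (S + d' z) (y - z).
Proof.
move=> Qy; set v := y - z; set K := S + d' z.
have C0 : 0 <= n%:R * (`|K| + `|v| + 1) by rewrite mulr_ge0 ?ler0n ?addr_ge0.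
apply: (ge0_of_ge_oppM C0) => eta eta0 eta1.
have [del del0 hdel] := dgf_selection_near argmin_lin_Qo eta0.
have nv0 : 0 <= `|v| := normr_ge0 v.
pose t := del / (2 * (`|v| + 1) * (del + 1)).
have den0 : 0 < 2 * (`|v| + 1) * (del + 1) by rewrite !mulr_gt0 //; lra.
have t0 : 0 < t by rewrite /t divr_gt0.
have t1 : t <= 1 by rewrite /t ler_pdivrMr // mul1r; nra.
have ttv : t * (`|v| + 1) < del.
  have -> : t * (`|v| + 1) = del / (2 * (del + 1)).
    by rewrite /t; field; apply/andP; split; apply: lt0r_neq0; lra.
  by rewrite ltr_pdivrMr; nra.
have t01 : 0 <= t <= 1 by rewrite ltW.
have Qp : Q (t *: y + (1 - t) *: z) := convex_setP cQ Qy Qz t01.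
have [w Qow] := Qo_dense Qp (mulr_gt0 t0 eta0).
set r := w - _ => hr.
have ewz : w - z = t *: v + r by rewrite /r /v; apply/rowP => i; rewrite !mxE; ring.
have wz : `|z - w| < del.
  rewrite -normrN opprB ewz; apply: le_lt_trans (ler_normD _ _) _.
  rewrite normrZ ger0_norm ?ltW //; have := ler_piMr (ltW t0) eta1; nra.
apply: (sdot_perturbed_ge t0 eta0 eta1 _ hr (e := d' w - d' z)).
  by rewrite -normrN opprB; exact: hdel.
have -> : K + (d' w - d' z) = S + d' w by rewrite /K; apply/rowP => i; rewrite !mxE; ring.
by rewrite -ewz; exact: argmin_lin_monotone.
Qed.

End FirstOrder.

Lemma argmin_lin_bregman_ge S c z y : 0 < c -> Q z -> Q y ->
  (forall p, Q p -> sdot S z + c * d z <= sdot S p + c * d p) ->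
  c * bregman d d' z y <= sdot S y + c * d y - (sdot S z + c * d z).
Proof.
move=> c0 Qz Qy zmin.
have zmin' p : Q p -> sdot (c^-1 *: S) z + d z <= sdot (c^-1 *: S) p + d p.
  move=> Qp; rewrite !sdotZl -(ler_pM2l c0) !mulrDr !mulrA mulfV ?gt_eqF // !mul1r.
  exact: zmin.
have := argmin_lin_first_order Qz zmin' Qy.
rewrite sdotDl sdotZl -(pmulr_rge0 _ c0) mulrDr mulrA mulfV ?gt_eqF // mul1r.
rewrite /bregman !sdotBr; lra.
Qed.

Lemma prox_three_point z s p y : Qo Q d z -> Q y -> is_prox Q d d' z s p ->
  sdot s (p - z) + 2^-1 * nrm (p - z) ^+ 2 <= sdot s (y - z) + bregman d d' z y.
Proof.
move=> Qoz Qy [Qp pmin]; have Qz : Q z by case: Qoz.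
case: dgf => _ _ scd dsub _.
have := subdiff_strongly_convex_ge cQ scd Qz Qp (dsub _ Qoz).
have := pmin y Qy; rewrite /bregman; lra.
Qed.

End DistanceGenerating.

Section Weights.
Variable R : realType.

Lemma gam_ge0 t : 0 <= gam R t.
Proof. by rewrite divr_ge0 ?ler0n. Qed.

Lemma GamS t : Gam R t.+1 = Gam R t + gam R t.+1.
Proof. by rewrite /Gam big_ord_recr. Qed.

Lemma GamE t : Gam R t = t.+1%:R * t.+2%:R / 4.
Proof.
elim: t => [|t IH]; first by rewrite /Gam big_ord1 /gam /=; field.
by rewrite GamS IH /gam !(mulrSr _ t.+1) !(mulrSr _ t); field.
Qed.

Lemma Gam_gt0 t : 0 < Gam R t.
Proof. by rewrite GamE divr_gt0 ?mulr_gt0 ?ltr0Sn. Qed.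

Lemma tau_ge0 t : 0 <= tau R t.
Proof. by rewrite divr_ge0 ?gam_ge0 ?ltW ?Gam_gt0. Qed.

Lemma tauMGam t : tau R t * Gam R t.+1 = gam R t.+1.
Proof. by rewrite mulfVK // gt_eqF ?Gam_gt0. Qed.

Lemma GamMtau t : Gam R t * tau R t = gam R t.+1 * (1 - tau R t).
Proof. by rewrite -[Gam R t](addrK (gam R t.+1)) -GamS mulrBl mulrC tauMGam; ring. Qed.

Lemma Gam_tau_sqr_le1 t : Gam R t.+1 * tau R t ^+ 2 <= 1.
Proof.
have G0 := Gam_gt0 t.+1.
have -> : Gam R t.+1 * tau R t ^+ 2 = gam R t.+1 ^+ 2 / Gam R t.+1.
  by rewrite /tau; field; rewrite gt_eqF.
rewrite ler_pdivrMr // mul1r /gam GamE !(mulrSr _ t.+2) !(mulrSr _ t.+1) !(mulrSr _ t).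
have : 0 <= t%:R :> R by exact: ler0n.
by move: (t%:R : R) => a a0; nra.
Qed.

End Weights.

Section EstimateSequence.
Variables (R : realType) (n : nat).
Local Notation vec := 'rV[R]_n.
Variables (nrm : vec -> R) (Q : set vec) (f : vec -> R) (gradf : vec -> vec) (L : R).
Variables (d : vec -> R) (d' : vec -> vec) (T : nat) (Ls : nat -> R) (x u z xh : nat -> vec).
Hypothesis nrmP : is_norm nrm.
Hypothesis clQ : closed Q.
Hypothesis cQ : convex_set Q.
Hypothesis cf : convex_fun f.
Hypothesis df : forall p, differentiable f p /\ forall h, 'd f p h = sdot (gradf p) h.
Hypothesis L0 : 0 < L.
Hypothesis lipg : forall p q, Q p -> Q q ->
  dual_norm nrm (gradf p - gradf q) <= L * nrm (p - q).
Hypothesis dgf : is_dgf nrm Q d d'.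
Hypothesis Ls0 : Ls 0%N = L.
Hypothesis x0min : is_argmin Q d (x 0%N).
Hypothesis dx0 : d (x 0%N) = 0.
Hypothesis u0min : is_argmin Q (fun p => gam R 0 * (f (x 0%N) + sdot (gradf (x 0%N)) (p - x 0%N))
  + Ls 0%N * d p) (u 0%N).
Hypothesis z0u : z 0%N = u 0%N.
Hypothesis xS : forall t, (t <= T)%N -> x t.+1 = tau R t *: z t + (1 - tau R t) *: u t.
Hypothesis xhS : forall t, (t <= T)%N ->
  is_prox Q d d' (z t) ((gam R t.+1 / Ls t) *: gradf (x t.+1)) (xh t.+1).
Hypothesis uS : forall t, (t <= T)%N -> u t.+1 = tau R t *: xh t.+1 + (1 - tau R t) *: u t.
Hypothesis step : forall t, (1 <= t <= T)%N ->
  [/\ 0 < Ls t, Ls t <= L,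
      f (u t) <= f (x t) + sdot (gradf (x t)) (u t - x t) + Ls t / 2 * nrm (u t - x t) ^+ 2
    & is_argmin Q (fun p => \sum_(k < t.+1)
        gam R k * (f (x k) + sdot (gradf (x k)) (p - x k)) + Ls t * d p) (z t)].

Definition model t p := \sum_(k < t.+1)
  gam R k * (f (x k) + sdot (gradf (x k)) (p - x k)) + Ls t * d p.

Definition slope t := \sum_(k < t.+1) gam R k *: gradf (x k).

Definition err t := \sum_(k < t)
  (Ls k - Ls k.+1) * (d (z k.+1) - 2^-1 * nrm (z k - xh k.+1) ^+ 2).

Lemma model_sub t p q :
  model t p - model t q = sdot (slope t) (p - q) + Ls t * (d p - d q).
Proof.
rewrite /model /slope sdot_suml opprD addrACA -sumrB -mulrBr; congr (_ + _).
by apply: eq_bigr => k _; rewrite sdotZl !sdotBr; ring.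
Qed.

Lemma model_succ t p : model t.+1 p = model t p
  + gam R t.+1 * (f (x t.+1) + sdot (gradf (x t.+1)) (p - x t.+1)) + (Ls t.+1 - Ls t) * d p.
Proof. by rewrite /model big_ord_recr /=; ring. Qed.

Lemma Ls_gt0 t : (t <= T)%N -> 0 < Ls t.
Proof. by case: t => [|t] tT; [rewrite Ls0 | case: (@step t.+1 tT)]. Qed.

Lemma z_argmin t : (t <= T)%N -> is_argmin Q (model t) (z t).
Proof.
case: t => [_|t tT]; last by case: (@step t.+1 tT).
have [Qu0 u0le] := u0min; rewrite z0u; split => // p Qp.
by rewrite /model !big_ord1; exact: u0le.
Qed.

Lemma z_argmin_lin t : (t <= T)%N -> forall p, Q p ->
  sdot (slope t) (z t) + Ls t * d (z t) <= sdot (slope t) p + Ls t * d p.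
Proof.
move=> tT p Qp; have [_ /(_ p Qp)] := z_argmin tT.
rewrite -subr_ge0 model_sub sdotBr -subr_ge0; lra.
Qed.

Lemma z_Qo t : (t <= T)%N -> Qo Q d (z t).
Proof.
move=> tT; have [Qz _] := z_argmin tT; split => //.
by exists (- (Ls t)^-1 *: slope t); apply: argmin_lin_subdiff (Ls_gt0 tT) (z_argmin_lin tT).
Qed.

Lemma model_bregman_ge t p : (t <= T)%N -> Q p ->
  Ls t * bregman d d' (z t) p <= model t p - model t (z t).
Proof.
move=> tT Qp; have [Qz _] := z_argmin tT.
rewrite model_sub sdotBr.
have := argmin_lin_bregman_ge clQ cQ dgf (Ls_gt0 tT) Qz Qp (z_argmin_lin tT); lra.
Qed.

Lemma estimate_base : Gam R 0 * f (u 0%N) <= model 0 (z 0%N) + err 0.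
Proof.
have [Qx0 x0le] := x0min; have [Qu0 _] := u0min.
have desc := lipschitz_gradient_upper_bound cf df nrmP cQ (ltW L0) lipg Qx0 Qu0.
have [_ _ scd _ _] := dgf.
have sub0 : subdiff Q d (x 0%N) 0.
  by move=> y Qy; rewrite sdot0l addr0; exact: x0le.
have := subdiff_strongly_convex_ge cQ scd Qx0 Qu0 sub0.
rewrite sdot0l dx0 !subr0 => sc.
have := ler_wpM2l (ltW L0) sc.
rewrite /err big_ord0 /model big_ord1 /= z0u Ls0 /Gam big_ord1 /gam div1r addr0.
move: desc; set N := nrm _; set a := sdot _ _.
have : 0 <= L * N ^+ 2 by rewrite mulr_ge0 ?sqr_ge0 ?ltW.
lra.
Qed.

Lemma err_succ t : err t.+1 =
  err t + (Ls t - Ls t.+1) * (d (z t.+1) - 2^-1 * nrm (xh t.+1 - z t) ^+ 2).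
Proof. by rewrite /err big_ord_recr /= nrm_distC. Qed.

Lemma descent_step t : (t < T)%N ->
  Gam R t.+1 * f (u t.+1) <= Gam R t.+1 * f (x t.+1)
    + gam R t.+1 * sdot (gradf (x t.+1)) (xh t.+1 - z t)
    + Ls t.+1 / 2 * nrm (xh t.+1 - z t) ^+ 2.
Proof.
move=> tT; have tT' := ltnW tT; have [L1pos _ desc _] := @step t.+1 tT.
have ux : u t.+1 - x t.+1 = tau R t *: (xh t.+1 - z t).
  by rewrite uS // xS //; apply/rowP => i; rewrite !mxE; ring.
rewrite ux sdotZr nrmZ // ger0_norm ?tau_ge0 // exprMn in desc.
set a := sdot _ _ in desc *; set N2 := nrm _ ^+ 2 in desc *.
have N20 : 0 <= Ls t.+1 / 2 * N2 by rewrite mulr_ge0 ?sqr_ge0 // divr_ge0 // ltW.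
have := ler_piMl N20 (Gam_tau_sqr_le1 R t).
have := ler_wpM2l (ltW (Gam_gt0 R t.+1)) desc.
have : Gam R t.+1 * (tau R t * a) = gam R t.+1 * a by rewrite -tauMGam; ring.
lra.
Qed.

Lemma convexity_step t : (t < T)%N ->
  Gam R t * f (x t.+1) - gam R t.+1 * (1 - tau R t) * sdot (gradf (x t.+1)) (z t - u t)
    <= Gam R t * f (u t).
Proof.
move=> tT; have tT' := ltnW tT; have := convex_gradient_ineq cf df (x t.+1) (u t).
have -> : u t - x t.+1 = (- tau R t) *: (z t - u t).
  by rewrite xS //; apply/rowP => i; rewrite !mxE; ring.
rewrite sdotZr => /(ler_wpM2l (ltW (Gam_gt0 R t))).
set b := sdot _ _; have : Gam R t * (tau R t * b) = gam R t.+1 * (1 - tau R t) * b.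
  by rewrite mulrA GamMtau.
lra.
Qed.

Lemma prox_step t : (t < T)%N ->
  gam R t.+1 * sdot (gradf (x t.+1)) (xh t.+1 - z t) + Ls t / 2 * nrm (xh t.+1 - z t) ^+ 2
    <= gam R t.+1 * sdot (gradf (x t.+1)) (z t.+1 - z t) + (model t (z t.+1) - model t (z t)).
Proof.
move=> tT; have tT' := ltnW tT; have L0pos := Ls_gt0 tT'; have [Qz' _] := z_argmin tT.
have := prox_three_point cQ dgf (z_Qo tT') Qz' (xhS tT').
move=> /(ler_wpM2l (ltW L0pos)); have := model_bregman_ge tT' Qz'.
have e s : Ls t * (gam R t.+1 / Ls t * s) = gam R t.+1 * s by field; rewrite gt_eqF.
rewrite !sdotZl !mulrDr !e; lra.
Qed.

Lemma estimate_step t : (t < T)%N ->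
  Gam R t * f (u t) <= model t (z t) + err t ->
  Gam R t.+1 * f (u t.+1) <= model t.+1 (z t.+1) + err t.+1.
Proof.
move=> tT IH; have tT' := ltnW tT.
have := descent_step tT; have := convexity_step tT; have := prox_step tT.
rewrite err_succ model_succ GamS.
have -> : z t.+1 - x t.+1 = (z t.+1 - z t) + (1 - tau R t) *: (z t - u t).
  by rewrite xS //; apply/rowP => i; rewrite !mxE; ring.
rewrite [sdot _ (_ + _ *: _)]sdotDr sdotZr; lra.
Qed.

Lemma estimate t : (t <= T)%N -> Gam R t * f (u t) <= model t (z t) + err t.
Proof.
elim: t => [_|t IH tT]; first exact: estimate_base.
exact: estimate_step tT (IH (ltnW tT)).
Qed.

Lemma estimate_rate xstar : is_argmin Q f xstar ->
  Gam R T * (f (u T) - f xstar) <= Ls T * d xstar + err T.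
Proof.
move=> [Qxs _]; have := estimate (leqnn T).
have [_ /(_ xstar Qxs)] := z_argmin (leqnn T).
have : \sum_(k < T.+1) gam R k * (f (x k) + sdot (gradf (x k)) (xstar - x k))
    <= Gam R T * f xstar.
  rewrite /Gam mulr_suml; apply: ler_sum => k _; apply: ler_wpM2l; first exact: gam_ge0.
  exact: convex_gradient_ineq.
rewrite /model; lra.
Qed.

End EstimateSequence.

Theorem corollary1 (R : realType) (n : nat)
  (nrm : 'rV[R]_n -> R) (Q : set 'rV[R]_n)
  (f : 'rV[R]_n -> R) (gradf : 'rV[R]_n -> 'rV[R]_n) (L : R)
  (d : 'rV[R]_n -> R) (d' : 'rV[R]_n -> 'rV[R]_n)
  (xstar : 'rV[R]_n) (T : nat)
  (Ls : nat -> R) (x u z xh : nat -> 'rV[R]_n) :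
  is_norm nrm -> closed Q -> convex_set Q ->
  convex_fun f ->
  (forall p, differentiable f p /\ forall h, 'd f p h = sdot (gradf p) h) ->
  0 < L ->
  (forall p q, Q p -> Q q ->
     dual_norm nrm (gradf p - gradf q) <= L * nrm (p - q)) ->
  is_dgf nrm Q d d' ->
  is_argmin Q f xstar ->
  Ls 0%N = L ->
  is_argmin Q d (x 0%N) -> d (x 0%N) = 0 ->
  is_argmin Q (fun p => gam R 0 * (f (x 0%N) + sdot (gradf (x 0%N)) (p - x 0%N))
                        + Ls 0%N * d p) (u 0%N) ->
  z 0%N = u 0%N ->
  (forall t, (t <= T)%N ->
     x t.+1 = tau R t *: z t + (1 - tau R t) *: u t) ->
  (forall t, (t <= T)%N ->
     is_prox Q d d' (z t) ((gam R t.+1 / Ls t) *: gradf (x t.+1)) (xh t.+1)) ->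
  (forall t, (t <= T)%N ->
     u t.+1 = tau R t *: xh t.+1 + (1 - tau R t) *: u t) ->
  (forall t, (1 <= t <= T)%N ->
     [/\ 0 < Ls t, Ls t <= L,
         f (u t) <= f (x t) + sdot (gradf (x t)) (u t - x t)
                    + Ls t / 2 * nrm (u t - x t) ^+ 2
       & is_argmin Q (fun p => \sum_(k < t.+1)
                  gam R k * (f (x k) + sdot (gradf (x k)) (p - x k))
                  + Ls t * d p) (z t)]) ->
  f (u T) - f xstar <=
    4 * Ls T * d xstar / (T.+1%:R * T.+2%:R)
    + \sum_(t < T) 4 * (Ls t - Ls t.+1) / (T.+1%:R * T.+2%:R)
                   * (d (z t.+1) - 2^-1 * nrm (z t - xh t.+1) ^+ 2).
Proof.
move=> nrmP clQ cQ cf df L0 lipg dgf xsmin Ls0 x0min dx0 u0min z0u xS xhS uS step.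
have := estimate_rate nrmP clQ cQ cf df L0 lipg dgf Ls0 x0min dx0 u0min z0u xS xhS uS step xsmin.
set E := err _ _ _ _ _ _; set P := T.+1%:R * T.+2%:R.
have P0 : 0 < P by rewrite mulr_gt0 ?ltr0Sn.
have -> : \sum_(t < T) 4 * (Ls t - Ls t.+1) / P * (d (z t.+1) - 2^-1 * nrm (z t - xh t.+1) ^+ 2)
    = 4 / P * E.
  by rewrite /E /err mulr_sumr; apply: eq_bigr => k _; ring.
rewrite GamE -/P => rate.
rewrite -(ler_pM2l (divr_gt0 P0 (ltr0n _ 4))).
have -> : P / 4%:R * (4 * Ls T * d xstar / P + 4 / P * E) = Ls T * d xstar + E.
  by field; rewrite gt_eqF.
by [].
Qed.
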